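(* Let $G=(V,E)$ be a finite simple graph with $|V|\ge1$ and minimum degree $\delta(G)\ge1$, whose vertices operate independently, vertex $v$ with probability $p_v$, and let $q_v=1-p_v$, $\mathbf{p}=(p_v)_{v\in V}$. Then \[ \operatorname{DRel}(G,\mathbf{p})=\sum_{\substack{J\subseteq V\\ |J|\le|V|-\delta(G)}}(-1)^{|J|}\prod_{v\in N_G[J]}q_v+(-1)^{|V|-\delta(G)+1}\binom{|V|-1}{\delta(G)-1}\prod_{v\in V}q_v. \]
   Context: $\operatorname{DRel}(G,\mathbf{p})$ is the probability that the set of operating vertices is a dominating set of $G$ (every vertex not in the set is adjacent to a vertex in it); edges never fail. $N_G[J]$ is the closed neighbourhood of $J$ (vertices in $J$ or adjacent to a vertex of $J$). $\delta(G)$ is the minimum degree of $G$. *)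

From HB Require Import structures.
From mathcomp Require Import all_boot all_order all_algebra.
Set Implicit Arguments. Unset Strict Implicit. Unset Printing Implicit Defensive.
Import Order.TTheory GRing.Theory Num.Theory.
Local Open Scope ring_scope.

Definition simple_graph (T : finType) (e : rel T) : Prop :=
  symmetric e /\ irreflexive e.

Definition nbhd (T : finType) (e : rel T) (v : T) : {set T} := [set u | e v u].
Definition deg (T : finType) (e : rel T) (v : T) : nat := #|nbhd e v|.

(* minimum degree delta(G) (the default #|T| is never attained when T is
   nonempty, since deg v <= #|T| - 1 for a loopless graph) *)
Definition mindeg (T : finType) (e : rel T) : nat :=
  \big[minn/#|T|]_(v : T) deg e v.

Definition closed_nbhd (T : finType) (e : rel T) (J : {set T}) : {set T} :=
  [set u | (u \in J) || [exists w in J, e w u]].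

Definition dominating (T : finType) (e : rel T) (S : {set T}) : bool :=
  [forall v, (v \in S) || [exists w in S, e w v]].

Definition DRel (R : pzRingType) (T : finType) (e : rel T) (p : T -> R) : R :=
  \sum_(S : {set T} | dominating e S)
     (\prod_(v in S) p v) * (\prod_(v in ~: S) (1 - p v)).

From HB Require Import structures.
From mathcomp Require Import all_boot all_order all_algebra.
From mathcomp Require Import zify.
Set Implicit Arguments.
Unset Strict Implicit.
Unset Printing Implicit Defensive.
Import Order.TTheory GRing.Theory Num.Theory.
Local Open Scope ring_scope.

(* Expanding the indicator of domination, [S dominates] = prod_v (1 - [v notin N[S]]),
   and using [J misses N[S]] <=> [S misses N[J]] gives the inclusion-exclusion formula
   DRel = sum_J (-1)^|J| prod_{v in N[J]} q_v.  A vertex u outside N[J] has all of its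
   at least delta neighbours outside J, so N[J] = V as soon as |J| > |V| - delta; these
   terms add up to prod_v q_v times sum_{|J| > |V| - delta} (-1)^|J|, an alternating
   tail of binomial coefficients equal to (-1)^(|V|-delta+1) C(|V|-1, delta-1). *)

Section SubsetExpansions.
Variables (R : comPzRingType) (T : finType).

Lemma prodD_subsets (F G : T -> R) :
  \prod_i (F i + G i) = \sum_(J : {set T}) \prod_(i in J) F i * \prod_(i in ~: J) G i.
Proof.
rewrite bigA_distr; apply: eq_bigr => J _.
rewrite (bigID (mem J)) /=; congr (_ * _).
  by apply: eq_bigr => i ->.
by apply: eq_big => [i|i /negbTE ->]; rewrite ?in_setC.
Qed.

Lemma prod1B_subsets (a : T -> R) :
  \prod_i (1 - a i) = \sum_(J : {set T}) (-1) ^+ #|J| * \prod_(i in J) a i.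
Proof.
under eq_bigr do rewrite addrC.
rewrite prodD_subsets; apply: eq_bigr => J _.
by rewrite prodrN [X in _ * X]big1 ?mulr1.
Qed.

Lemma prod_indicator (A P : {set T}) :
  \prod_(i in A) (i \in P)%:R = (A \subset P)%:R :> R.
Proof.
have [/subsetP AP | /subsetPn [i iA iP]] := boolP (A \subset P).
  by rewrite big1 // => i /AP ->.
by rewrite (bigD1 i) //= (negbTE iP) mul0r.
Qed.

Lemma sum_subsets_weight (p : T -> R) (B : {set T}) :
  \sum_(S : {set T} | S \subset B) \prod_(v in S) p v * \prod_(v in ~: S) (1 - p v)
  = \prod_(v in ~: B) (1 - p v).
Proof.
have := prodD_subsets (fun i => (i \in B)%:R * p i) (fun i => 1 - p i).
have -> : \prod_i ((i \in B)%:R * p i + (1 - p i)) = \prod_(i in ~: B) (1 - p i).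
  rewrite [RHS]big_mkcond; apply: eq_bigr => i _; rewrite in_setC.
  by case: (i \in B); rewrite /= ?mul1r ?subrKC ?mul0r ?add0r.
move->; rewrite [RHS](bigID (fun S : {set T} => S \subset B)) /=.
rewrite [X in _ = _ + X]big1 ?addr0 => [|S /subsetPn [i iS iB]]; last first.
  by rewrite (bigD1 i) //= (negbTE iB) !mul0r.
apply: eq_bigr => S /subsetP SB; congr (_ * _); apply: eq_bigr => i /SB iB.
by rewrite iB mul1r.
Qed.

Lemma sum_sign_subsets (t : T) : \sum_(J : {set T}) (-1) ^+ #|J| = 0 :> R.
Proof.
have := prod1B_subsets (fun=> 1); rewrite (bigD1 t) //= subrr mul0r => /esym.
by under eq_bigr do rewrite big1_eq mulr1.
Qed.

Lemma sum_sign_card_gt (t : T) (m : nat) :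
  \sum_(J : {set T} | (m < #|J|)%N) (-1) ^+ #|J| = (-1) ^+ m.+1 * 'C(#|T|.-1, m)%:R :> R.
Proof.
have card_gtS k : \sum_(J : {set T} | (k < #|J|)%N) (-1) ^+ #|J| =
    (-1) ^+ k.+1 * 'C(#|T|, k.+1)%:R
    + \sum_(J : {set T} | (k.+1 < #|J|)%N) (-1) ^+ #|J| :> R.
  rewrite (bigID (fun J : {set T} => #|J| == k.+1)) /=; congr (_ + _).
    rewrite -card_draws mulr_natr -sumr_const.
    by apply: eq_big => [J|J /andP [_ /eqP ->]]; rewrite // inE andb_idl // => /eqP ->.
  by apply: eq_bigl => J; rewrite [in RHS]ltn_neqAle eq_sym andbC.
have /prednK : (0 < #|T|)%N by apply/card_gt0P; exists t.
move: #|T|.-1 => n card_T; rewrite -card_T in card_gtS *.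
elim: m => [|m IH].
  have := sum_sign_subsets t; rewrite (bigD1 set0) //= cards0 expr0 => /eqP.
  rewrite addrC addr_eq0 => /eqP sum_nonempty.
  by rewrite bin0 mulr1 expr1 -[RHS]sum_nonempty; apply: eq_bigl => J; rewrite card_gt0.
have := card_gtS m; rewrite IH binS natrD => /(canLR (addKr _)) <-.
by rewrite mulrDr opprD addrNK [in RHS]exprS mulN1r mulNr.
Qed.

End SubsetExpansions.

Section Graph.
Variables (T : finType) (e : rel T).

Lemma mindeg_le_deg (v : T) : (mindeg e <= deg e v)%N.
Proof.
rewrite /mindeg; have : v \in index_enum T by rewrite mem_index_enum.
elim: (index_enum T) => [|a r IH] //; rewrite big_cons in_cons => /predU1P [->|/IH].
  exact: geq_minl.
exact: leq_trans (geq_minr _ _).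
Qed.

Lemma mindeg_le_card : (mindeg e <= #|T|)%N.
Proof. by rewrite /mindeg; elim/big_rec: _ => // v n _; apply: leq_trans (geq_minr _ _). Qed.

Lemma dominating_closed_nbhd (S : {set T}) : dominating e S = ([set: T] \subset closed_nbhd e S).
Proof.
apply/forallP/subsetP => [dom v _ | dom v]; first by rewrite inE dom.
by have := dom v; rewrite !inE => ->.
Qed.

Hypothesis esym : symmetric e.

Lemma disjoint_closed_nbhd (J S : {set T}) :
  [disjoint J & closed_nbhd e S] = [disjoint S & closed_nbhd e J].
Proof.
suff imp (A B : {set T}) : [disjoint A & closed_nbhd e B] -> [disjoint B & closed_nbhd e A].
  by apply/idP/idP; apply: imp.
move=> /pred0P AB; apply/pred0P => b /=; apply/negbTE/andP => -[bB].
rewrite inE => /orP [bA | /existsP [a /andP [aA eab]]].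
  by have := AB b; rewrite /= bA inE bB.
by have := AB a; rewrite /= aA inE => /norP [_ /existsPn /(_ b)]; rewrite bB esym eab.
Qed.

Lemma dominating_inclusion_exclusion (R : comPzRingType) (S : {set T}) :
  (dominating e S)%:R = \sum_(J : {set T}) (-1) ^+ #|J| * (S \subset ~: closed_nbhd e J)%:R :> R.
Proof.
rewrite dominating_closed_nbhd -prod_indicator.
have -> : \prod_(v in [set: T]) (v \in closed_nbhd e S)%:R
          = \prod_v (1 - (v \in ~: closed_nbhd e S)%:R) :> R.
  apply: eq_big => [v|v _]; rewrite ?in_setT ?in_setC //.
  by case: (_ \in _); rewrite ?subr0 ?subrr.
rewrite (prod1B_subsets (fun v => (v \in ~: closed_nbhd e S)%:R)); apply: eq_bigr => J _.
by rewrite prod_indicator !subsets_disjoint !setCK disjoint_closed_nbhd.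
Qed.

Lemma DRel_inclusion_exclusion (R : comPzRingType) (p : T -> R) :
  DRel e p = \sum_(J : {set T}) (-1) ^+ #|J| * \prod_(v in closed_nbhd e J) (1 - p v).
Proof.
rewrite /DRel big_mkcond /=.
under eq_bigr => S _.
  have -> : (if dominating e S then \prod_(v in S) p v * \prod_(v in ~: S) (1 - p v) else 0)
      = (dominating e S)%:R * (\prod_(v in S) p v * \prod_(v in ~: S) (1 - p v)).
    by case: (dominating e S); rewrite ?mul1r ?mul0r.
  rewrite dominating_inclusion_exclusion mulr_suml.
over.
rewrite exchange_big /=; apply: eq_bigr => J _.
rewrite -[in RHS](setCK (closed_nbhd e J)) -sum_subsets_weight mulr_sumr [RHS]big_mkcond /=.
by apply: eq_bigr => S _; case: (S \subset _); rewrite ?mulr1 ?mulr0 ?mul0r.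
Qed.

Hypothesis eirr : irreflexive e.

Lemma closed_nbhd_setT (J : {set T}) : (#|T| - mindeg e < #|J|)%N -> closed_nbhd e J = [set: T].
Proof.
move=> J_large; apply/setP => u; rewrite in_setT inE; apply/negPn/negP.
rewrite negb_or => /andP [uJ /existsPn uJ'].
have nbhd_sub : nbhd e u \proper ~: J.
  apply/properP; split; last by exists u; rewrite !inE ?eirr.
  apply/subsetP => w; rewrite !inE => euw; apply: contraT; rewrite negbK => wJ.
  by have := uJ' w; rewrite wJ esym euw.
have := proper_card nbhd_sub; have := cardsC J.
have := mindeg_le_deg u; rewrite /deg; lia.
Qed.

End Graph.

Theorem corollary2 (R : realFieldType) (T : finType) (e : rel T)
  (p : T -> R) :
  simple_graph e ->
  (1 <= #|T|)%N ->
  (1 <= mindeg e)%N ->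
  (forall v, 0 <= p v <= 1) ->
  DRel e p =
    \sum_(J : {set T} | (#|J| <= #|T| - mindeg e)%N)
       (-1) ^+ #|J| * \prod_(v in closed_nbhd e J) (1 - p v)
    + (-1) ^+ (#|T| - mindeg e + 1) * ('C(#|T| - 1, mindeg e - 1))%:R
        * \prod_(v : T) (1 - p v).
Proof.
move=> [esym eirr] /card_gt0P [t _] mindeg_gt0 _.
rewrite DRel_inclusion_exclusion // (bigID (fun J : {set T} => (#|J| <= #|T| - mindeg e)%N)) /=.
congr (_ + _).
transitivity (\sum_(J : {set T} | (#|T| - mindeg e < #|J|)%N)
                (-1) ^+ #|J| * \prod_(v : T) (1 - p v)).
  apply: eq_big => [J|J]; first by rewrite ltnNge.
  rewrite -ltnNge => /(closed_nbhd_setT esym eirr) ->.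
  by congr (_ * _); apply: eq_bigl => v; rewrite in_setT.
have mindeg_le := mindeg_le_card e.
rewrite -mulr_suml (sum_sign_card_gt R t) addn1 -subn1 -[in RHS]bin_sub; last exact: leq_sub2r.
by have -> : (#|T| - 1 - (mindeg e - 1) = #|T| - mindeg e)%N by lia.
Qed.
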